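(* Let $D = \bigcup_{k=0}^{5} IPE_k$ be the set of available frequencies, where $IPE_0=\{40000,40070,40140\}$, $IPE_1=\{41000,41070,41140\}$, $IPE_2=\{42000,42070,42140\}$, $IPE_3=\{43000,43070,43140\}$, $IPE_4=\{44000,44070,44140,44210\}$, $IPE_5=\{45000,45070,45140,45210\}$. Let $s$ be a site with exactly 8 transmission paths (paths leaving $s$) and 8 reception paths (paths arriving at $s$), and suppose frequencies $f(t)\in D$ are assigned to these 16 paths such that: (i) any two transmission paths of $s$ satisfy $|f(t)-f(t')|\ge 100$; (ii) any transmission path $t$ and reception path $t'$ of $s$ satisfy $|f(t)-f(t')|\ge 220$; (iii) the 8 reception paths of $s$ receive pairwise distinct frequencies. Then every transmission path of $s$ receives a frequency in $\{40000, 40140, 41000, 41140, 42000, 42140, 43000, 43140\}$, and every reception path of $s$ receives a frequency in $\{44000, 44070, 44140, 44210, 45000, 45070, 45140, 45210\}$.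
   Context: Frequency assignment for a radio network: each link between two sites consists of two paths (one per direction); a path from site $s$ is a transmission path of $s$, a path to site $s$ is a reception path of $s$. Constraints between paths incident to the same site (''co-site'' constraints) impose minimum frequency gaps: 100 between two transmitters, 220 between a transmitter and a receiver, and a (small, positive) gap between two receivers. The six sets $IPE_k$ are called inter-planes; $IPE_0,\dots,IPE_3$ are ''small'' (3 frequencies) and $IPE_4,IPE_5$ are ''large'' (4 frequencies). A site with 8 links is called a $Cart8$ site. *)

From mathcomp Require Import all_boot all_order all_algebra.
Set Implicit Arguments. Unset Strict Implicit. Unset Printing Implicit Defensive.

Definition IPE0 : seq nat := [:: 40000; 40070; 40140].
Definition IPE1 : seq nat := [:: 41000; 41070; 41140].
Definition IPE2 : seq nat := [:: 42000; 42070; 42140].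
Definition IPE3 : seq nat := [:: 43000; 43070; 43140].
Definition IPE4 : seq nat := [:: 44000; 44070; 44140; 44210].
Definition IPE5 : seq nat := [:: 45000; 45070; 45140; 45210].

Definition D : seq nat := IPE0 ++ IPE1 ++ IPE2 ++ IPE3 ++ IPE4 ++ IPE5.

Definition fdist (a b : nat) : int := `|(a%:Z - b%:Z)%R|%R.

Definition Tfreqs : seq nat :=
  [:: 40000; 40140; 41000; 41140; 42000; 42140; 43000; 43140].
Definition Rfreqs : seq nat :=
  [:: 44000; 44070; 44140; 44210; 45000; 45070; 45140; 45210].

(* All frequencies of an inter-plane lie within 210 of each other, and
   distinct inter-planes are at least 790 apart, so a transmitter and a
   receiver of the site never share an inter-plane, while two transmitters
   in the same inter-plane are at least two 70-steps apart; hence an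
   inter-plane carries at most two transmitters.  Eight transmitters thus
   occupy at least four inter-planes, leaving at most two for the eight
   distinct receivers, which fit only into the two large ones.  So each
   small inter-plane carries exactly two transmitters, necessarily on its
   outer frequencies x000 and x140, and the receivers all lie in IPE_4 and
   IPE_5. *)

From mathcomp Require Import all_boot all_order all_algebra zify.
Set Implicit Arguments.
Unset Strict Implicit.
Unset Printing Implicit Defensive.

Lemma fdist_ge (c a b : nat) :
  (c%:Z <= fdist a b)%R = (c + a <= b) || (c + b <= a).
Proof. by rewrite /fdist; apply/idP/orP => [|[]] ?; lia. Qed.

Lemma card_le_size_of_inj_in (T : finType) (U : eqType) (A : {pred T})
    (g : T -> U) (s : seq U) :
  {in A &, injective g} -> {in A, forall x, g x \in s} -> #|A| <= size s.
Proof.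
move=> g_inj gA; rewrite cardE -(size_map g); apply: uniq_leq_size.
  rewrite map_inj_in_uniq ?enum_uniq //.
  by apply: sub_in2 g_inj => x; rewrite mem_enum.
by move=> _ /mapP[x xA ->]; apply: gA; rewrite -mem_enum.
Qed.

Lemma sum_card_fibres (T : finType) (g : T -> nat) m n :
  (forall x, m <= g x < n) -> \sum_(m <= p < n) #|[set x | g x == p]| = #|T|.
Proof.
move=> g_range.
under eq_bigr => p _ do rewrite -sum1dep_card.
rewrite (exchange_big_dep xpredT) //= -sum1_card.
apply: eq_bigr => x _; rewrite sum1_count.
under eq_count => p do rewrite eq_sym.
by rewrite count_uniq_mem ?iota_uniq ?mem_index_iota ?g_range.
Qed.

(* [plane f] is 40 + k for a frequency of IPE_k, and [slot f] its rank
   inside the inter-plane, in steps of 70. *)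
Definition plane (f : nat) : nat := f %/ 1000.
Definition slot (f : nat) : nat := f %% 1000 %/ 70.
Definition plane_size (p : nat) : nat := if p < 44 then 3 else 4.

Lemma plane_size_le4 p : plane_size p <= 4.
Proof. by rewrite /plane_size; case: ifP. Qed.

Lemma mem_D_decomp f : f \in D ->
  [/\ 40 <= plane f < 46, slot f < plane_size (plane f)
    & f = plane f * 1000 + slot f * 70].
Proof.
move=> fD; suff /and3P[? ? /eqP ?] : [&& 40 <= plane f < 46,
  slot f < plane_size (plane f) & f == plane f * 1000 + slot f * 70] by [].
by move: f fD; apply/allP; vm_compute.
Qed.

Lemma Tfreqs_grid :
  Tfreqs = [seq p * 1000 + k * 70 | p <- iota 40 4, k <- [:: 0; 2]].
Proof. by apply/eqP; vm_compute. Qed.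

Lemma Rfreqs_grid :
  Rfreqs = [seq p * 1000 + k * 70 | p <- iota 44 2, k <- iota 0 4].
Proof. by apply/eqP; vm_compute. Qed.

Lemma plane_neq_of_far f g : f \in D -> g \in D ->
  (220 <= fdist f g)%R -> plane f != plane g.
Proof.
move=> /mem_D_decomp[_ sf fE] /mem_D_decomp[_ sg gE].
have := plane_size_le4 (plane f); have := plane_size_le4 (plane g).
rewrite fdist_ge; lia.
Qed.

Lemma slot_gap_of_spaced f g : f \in D -> g \in D -> plane f = plane g ->
  (100 <= fdist f g)%R -> (slot f + 2 <= slot g) || (slot g + 2 <= slot f).
Proof.
move=> /mem_D_decomp[_ _ fE] /mem_D_decomp[_ _ gE] Epl.
by rewrite fdist_ge; lia.
Qed.

Lemma plane_occupancy_forced (a b : nat -> nat) :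
  \sum_(40 <= p < 46) a p = 8 -> \sum_(40 <= p < 46) b p = 8 ->
  (forall p, a p <= 2) -> (forall p, b p <= plane_size p) ->
  (forall p, a p = 0 \/ b p = 0) ->
  forall p, 40 <= p < 46 -> a p = if p < 44 then 2 else 0.
Proof.
rewrite /index_iota /= !big_cons !big_nil => sa sb a2 bcap ab p p_range.
move: (a2 40) (a2 41) (a2 42) (a2 43) (a2 44) (a2 45).
move: (bcap 40) (bcap 41) (bcap 42) (bcap 43) (bcap 44) (bcap 45).
move: (ab 40) (ab 41) (ab 42) (ab 43) (ab 44) (ab 45); rewrite /plane_size /=.
move=> *; have [->|[->|[->|[->|[->|->]]]]] :
  p = 40 \/ p = 41 \/ p = 42 \/ p = 43 \/ p = 44 \/ p = 45 by lia.
all: rewrite /=; lia.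
Qed.

Section Cart8Site.

Variables ft fr : 'I_8 -> nat.
Hypotheses (ftD : forall i, ft i \in D) (frD : forall j, fr j \in D).
Hypothesis ft_spaced : forall i i', i != i' -> (100 <= fdist (ft i) (ft i'))%R.
Hypothesis ft_fr_far : forall i j, (220 <= fdist (ft i) (fr j))%R.
Hypothesis fr_inj : injective fr.

Let tx p := [set i | plane (ft i) == p].
Let rx p := [set j | plane (fr j) == p].

Lemma card_tx_le2 p : #|tx p| <= 2.
Proof.
suff : #|tx p| <= size (iota 0 2) by rewrite size_iota.
apply: (card_le_size_of_inj_in (g := fun i => slot (ft i) %/ 2)).
  move=> i i'; rewrite !inE => /eqP pi /eqP pi' Ehalf.
  apply/eqP/negPn/negP => neq_ii'.
  have := slot_gap_of_spaced (ftD i) (ftD i') _ (ft_spaced neq_ii').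
  by rewrite pi pi' => /(_ erefl); lia.
move=> i _; have [_ + _] := mem_D_decomp (ftD i).
by have := plane_size_le4 (plane (ft i)); rewrite mem_iota; lia.
Qed.

Lemma card_rx_le p : #|rx p| <= plane_size p.
Proof.
suff : #|rx p| <= size (iota 0 (plane_size p)) by rewrite size_iota.
apply: (card_le_size_of_inj_in (g := fun j => slot (fr j))).
  move=> j j'; rewrite !inE => /eqP pj /eqP pj' Eslot; apply: fr_inj.
  have [_ _ ->] := mem_D_decomp (frD j); have [_ _ ->] := mem_D_decomp (frD j').
  by rewrite pj pj' Eslot.
move=> j; rewrite inE => /eqP <-; have [_ + _] := mem_D_decomp (frD j).
by rewrite mem_iota.
Qed.

Lemma tx_rx_exclusive p : #|tx p| = 0 \/ #|rx p| = 0.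
Proof.
have [|/card_gt0P[i]] := posnP #|tx p|; first by left.
rewrite inE => /eqP pi; right; apply/eqP; rewrite cards_eq0.
apply/eqP/setP => j.
rewrite !inE -pi eq_sym; apply/negbTE.
exact: plane_neq_of_far (ftD i) (frD j) (ft_fr_far i j).
Qed.

Lemma card_tx p : 40 <= p < 46 -> #|tx p| = if p < 44 then 2 else 0.
Proof.
move: p; apply: (plane_occupancy_forced (a := fun p => #|tx p|)
                                        (b := fun p => #|rx p|)).
- by rewrite sum_card_fibres ?card_ord // => i; case: (mem_D_decomp (ftD i)).
- by rewrite sum_card_fibres ?card_ord // => j; case: (mem_D_decomp (frD j)).
- exact: card_tx_le2.
- exact: card_rx_le.
- exact: tx_rx_exclusive.
Qed.

Lemma ft_in_Tfreqs i : ft i \in Tfreqs.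
Proof.
have [pl sl fE] := mem_D_decomp (ftD i); set p := plane (ft i) in pl sl fE.
have i_tx : i \in tx p by rewrite inE.
have [small card2] : p < 44 /\ #|tx p| = 2.
  have := card_tx pl; case: ifP => // _ /eqP.
  by rewrite cards_eq0 => /eqP tx0; rewrite tx0 inE in i_tx.
have /card_gt0P[i' /setD1P[i'_neq i'_tx]] : 0 < #|tx p :\ i|.
  by have := cardsD1 i (tx p); rewrite i_tx card2; lia.
move: i'_tx; rewrite inE => /eqP pi'.
have neq_ii' : i != i' by rewrite eq_sym.
have := slot_gap_of_spaced (ftD i) (ftD i') (esym pi') (ft_spaced neq_ii').
have [_ sl' _] := mem_D_decomp (ftD i').
rewrite pi' /plane_size small /= in sl sl' * => gap.
rewrite Tfreqs_grid fE; apply/allpairsP; exists (p, slot (ft i)).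
by split=> //=; rewrite !inE; lia.
Qed.

Lemma fr_in_Rfreqs j : fr j \in Rfreqs.
Proof.
have [pl sl fE] := mem_D_decomp (frD j); set p := plane (fr j) in pl sl fE.
have j_rx : j \in rx p by rewrite inE.
have large : 44 <= p.
  rewrite leqNgt; apply/negP => small.
  have [|/eqP] := tx_rx_exclusive p; first by rewrite card_tx // small.
  by rewrite cards_eq0 => /eqP rx0; rewrite rx0 inE in j_rx.
have {}sl := leq_trans sl (plane_size_le4 p).
rewrite Rfreqs_grid fE; apply/allpairsP; exists (p, slot (fr j)).
by split=> //=; rewrite !inE; lia.
Qed.

End Cart8Site.

Theorem mainTheorem1 (ft fr : 'I_8 -> nat)
  (HDt : forall i, ft i \in D) (HDr : forall j, fr j \in D)
  (Htt : forall i i' : 'I_8, i != i' -> (100 <= fdist (ft i) (ft i'))%R)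
  (Htr : forall i j : 'I_8, (220 <= fdist (ft i) (fr j))%R)
  (Hrr : injective fr) :
  (forall i, ft i \in Tfreqs) /\ (forall j, fr j \in Rfreqs).
Proof.
split; first exact: ft_in_Tfreqs HDt HDr Htt Htr Hrr.
exact: fr_in_Rfreqs HDt HDr Htt Htr Hrr.
Qed.
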